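(* Let $\mathcal C$ be a subcategory of the category of groups and $\mathcal H$ a class of maps for $\mathcal C$. If $\Gamma$ is an $\mathcal H$-invariant subgroup function on $\mathcal C$, then its stabilization $\Gamma_S$ with respect to $\mathcal H$ is itself stable with respect to $\mathcal H$, i.e. $(\Gamma_S)_S(A)=\Gamma_S(A)$ for all $A\in\mathcal C$. The same holds for an $\mathcal H$-invariant series $\{\Gamma^n\}$ with respect to a nested collection $\mathcal H=\{\mathcal H^n\}$ ($\mathcal H^{n+1}\subseteq \mathcal H^n$) of classes of maps: $\{\Gamma^n_S\}$ is stable under $\mathcal H$.
   Context: A subgroup function on $\mathcal C$ assigns to each $A\in\mathcal C$ a normal subgroup $\Gamma(A)\trianglelefteq A$. A series is a collection $\{\Gamma^n\}_{n\ge0}$ of subgroup functions with $\Gamma^0(A)=A$ and $\Gamma^{n+1}(A)\subset\Gamma^n(A)$. A class of maps for $\mathcal C$ is a set $\mathcal H$ of morphisms of $\mathcal C$ that contains all isomorphisms, is closed under composition, and is closed under nudge-outs: whenever $f:A\to B$ and $f':A\to B'$ lie in $\mathcal H$, there exist $C$ and $g:B\to C$, $g':B'\to C$ in $\mathcal H$ with $g\circ f=g'\circ f'$. $\Gamma$ is $\mathcal H$-invariant if $f(\Gamma(A))\subset\Gamma(B)$ for all $f:A\to B$ in $\mathcal H$; a series is $\{\mathcal H^n\}$-invariant if each $\Gamma^n$ is $\mathcal H^n$-invariant. The stabilization is $\Gamma_S(A)=\{a\in A\mid \exists f:A\to B \text{ in } \mathcal H \text{ with } f(a)\in\Gamma(B)\}$;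 for a series $\Gamma^n_S$ is the stabilization of $\Gamma^n$ w.r.t. $\mathcal H^n$. A subgroup function (series) is stable under $\mathcal H$ if it equals its own stabilization. *)

Record group := Group {
  gcar :> Type;
  gmul : gcar -> gcar -> gcar;
  gone : gcar;
  ginv : gcar -> gcar;
  gmulA : forall x y z, gmul x (gmul y z) = gmul (gmul x y) z;
  gmul1l : forall x, gmul gone x = x;
  gmulVl : forall x, gmul (ginv x) x = gone
}.

Arguments gmul {g}.
Arguments gone {g}.
Arguments ginv {g}.

Definition is_hom (G H : group) (f : G -> H) : Prop :=
  forall x y : G, f (gmul x y) = gmul (f x) (f y).

Record subcat := Subcat {
  Ob : Type;
  grp : Ob -> group;
  Mor : forall A B : Ob, (grp A -> grp B) -> Prop;
  Mor_hom : forall A B f, Mor A B f -> is_hom (grp A) (grp B) f;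
  Mor_id : forall A, Mor A A (fun x => x);
  Mor_comp : forall A B D (f : grp A -> grp B) (g : grp B -> grp D),
      Mor A B f -> Mor B D g -> Mor A D (fun x => g (f x))
}.

Definition maps_pred (C : subcat) :=
  forall A B : Ob C, (grp C A -> grp C B) -> Prop.

Definition is_iso (C : subcat) (A B : Ob C) (f : grp C A -> grp C B) : Prop :=
  Mor C A B f /\
  exists g : grp C B -> grp C A, Mor C B A g /\
    (forall x, g (f x) = x) /\ (forall y, f (g y) = y).

Definition class_of_maps (C : subcat) (H : maps_pred C) : Prop :=
  (forall A B f, H A B f -> Mor C A B f) /\
  (forall A B f, is_iso C A B f -> H A B f) /\
  (forall A B D f g, H A B f -> H B D g -> H A D (fun x => g (f x))) /\
  (forall A B B' (f : grp C A -> grp C B) (f' : grp C A -> grp C B'),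
      H A B f -> H A B' f' ->
      exists (D : Ob C) (g : grp C B -> grp C D) (g' : grp C B' -> grp C D),
        H B D g /\ H B' D g' /\ forall a, g (f a) = g' (f' a)).

Definition normal_subgroup (G : group) (S : G -> Prop) : Prop :=
  S gone /\
  (forall x y, S x -> S y -> S (gmul x y)) /\
  (forall x, S x -> S (ginv x)) /\
  (forall x g, S x -> S (gmul (ginv g) (gmul x g))).

Definition subgroup_fun (C : subcat) := forall A : Ob C, grp C A -> Prop.

Definition is_subgroup_function (C : subcat) (Γ : subgroup_fun C) : Prop :=
  forall A, normal_subgroup (grp C A) (Γ A).

Definition invariant (C : subcat) (H : maps_pred C) (Γ : subgroup_fun C) : Prop :=
  forall A B f, H A B f -> forall a, Γ A a -> Γ B (f a).

Definition stabilization (C : subcat) (H : maps_pred C) (Γ : subgroup_fun C)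
  : subgroup_fun C :=
  fun A a => exists (B : Ob C) (f : grp C A -> grp C B), H A B f /\ Γ B (f a).

Definition stable (C : subcat) (H : maps_pred C) (Γ : subgroup_fun C) : Prop :=
  forall A a, stabilization C H Γ A a <-> Γ A a.

Definition is_series (C : subcat) (Γs : nat -> subgroup_fun C) : Prop :=
  (forall n, is_subgroup_function C (Γs n)) /\
  (forall A a, Γs 0 A a) /\
  (forall n A a, Γs (S n) A a -> Γs n A a).


(* A class of maps contains the identities and is closed under composition, so
   a chain A -f-> B -g-> D witnessing membership in the double stabilization
   collapses to the single map g o f, while the identity shows Γ_S ⊆ (Γ_S)_S. *)

Lemma iso_id (C : subcat) (A : Ob C) : is_iso C A A (fun x => x).
Proof.
  split; [apply Mor_id|].
  exists (fun x => x); split; [apply Mor_id|]; split; reflexivity.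
Qed.

Lemma class_of_maps_id (C : subcat) (H : maps_pred C) (A : Ob C) :
  class_of_maps C H -> H A A (fun x => x).
Proof. intros [_ [Hiso _]]; apply Hiso, iso_id. Qed.

Lemma stabilization_incl (C : subcat) (H : maps_pred C) (Γ : subgroup_fun C) :
  (forall A, H A A (fun x => x)) ->
  forall A a, Γ A a -> stabilization C H Γ A a.
Proof. intros Hid A a Ha; exists A, (fun x => x); split; [apply Hid | exact Ha]. Qed.

Lemma stabilization_idem (C : subcat) (H : maps_pred C) (Γ : subgroup_fun C) :
  (forall A B D f g, H A B f -> H B D g -> H A D (fun x => g (f x))) ->
  forall A a, stabilization C H (stabilization C H Γ) A a -> stabilization C H Γ A a.
Proof.
  intros Hcomp A a [B [f [Hf [D [g [Hg HD]]]]]].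
  exists D, (fun x => g (f x)); split; [exact (Hcomp _ _ _ _ _ Hf Hg) | exact HD].
Qed.

Lemma stabilization_stable (C : subcat) (H : maps_pred C) (Γ : subgroup_fun C) :
  class_of_maps C H -> stable C H (stabilization C H Γ).
Proof.
  intros HC A a; split.
  - apply stabilization_idem; apply HC.
  - apply stabilization_incl; intro; apply class_of_maps_id, HC.
Qed.

Theorem corollary2p12 (C : subcat) :
  (forall (H : maps_pred C) (Γ : subgroup_fun C),
      class_of_maps C H ->
      is_subgroup_function C Γ ->
      invariant C H Γ ->
      stable C H (stabilization C H Γ)) /\
  (forall (Hs : nat -> maps_pred C) (Γs : nat -> subgroup_fun C),
      (forall n, class_of_maps C (Hs n)) ->
      (forall n A B f, Hs (S n) A B f -> Hs n A B f) ->
      is_series C Γs ->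
      (forall n, invariant C (Hs n) (Γs n)) ->
      forall n, stable C (Hs n) (stabilization C (Hs n) (Γs n))).
Proof.
  split.
  - intros H Γ HC _ _; exact (stabilization_stable C H Γ HC).
  - intros Hs Γs HC _ _ _ n; exact (stabilization_stable C (Hs n) (Γs n) (HC n)).
Qed.
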